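(* Let $P$ and $P'$ be programs over a propositional signature $\Sigma$ and $q\in\Sigma$. If $P$ and $P'$ are strongly equivalent, then $f_{SP}(P,q)$ and $f_{SP}(P',q)$ are strongly equivalent.
   Context: A program over $\Sigma$ is a finite set of rules $r$ of the form $a_1\vee\dots\vee a_k\leftarrow b_1,\dots,b_l,\ not\,c_1,\dots,not\,c_m,\ not\,not\,d_1,\dots,not\,not\,d_n$ with atoms in $\Sigma$; write $H(r)=\{a_i\}$, $B^+(r)=\{b_i\}$, $B^-(r)=\{c_i\}$, $B^{--}(r)=\{d_i\}$, $B(r)=B^+(r)\cup\{not\,c: c\in B^-(r)\}\cup\{not\,not\,d:d\in B^{--}(r)\}$ (elements of $B(r)$ are literals); a rule is written $H(r)\leftarrow B(r)$. $\Sigma(r)$, $\Sigma(P)$ are the atoms occurring in $r$, $P$. Reduct: $P^I=\{H(r)\leftarrow B^+(r): r\in P, B^-(r)\cap I=\emptyset, B^{--}(r)\subseteq I\}$. $I$ classically satisfies $r$ if $B^+(r)\subseteq I$, $B^-(r)\cap I=\emptyset$, $B^{--}(r)\subseteq I$ imply $H(r)\cap I\ne\emptyset$. An HT-interpretation $\langle X,Y\rangle$ ($X\subseteq Y$) is an HT-model of $P$ if $Y$ classically satisfies all rules of $P$ and $X$ all rules of $P^Y$. $Y$ is an answer set of $P$ if $\langle Y,Y\rangle$ is an HT-model and no $\langle X,Y\rangle$ with $X\subsetneq Y$ is; $AS(P)$ is the set of answer sets. $P_1,P_2$ are strongly equivalent if $AS(P_1\cup R)=AS(P_2\cup R)$ for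 every program $R$. Normal form: $r$ is tautological if $H(r)\cap B^+(r)\ne\emptyset$ or $B^+(r)\cap B^-(r)\ne\emptyset$ or $B^-(r)\cap B^{--}(r)\ne\emptyset$; $r\in P$ is minimal in $P$ if no $r'\in P$ has ($H(r')\subseteq H(r)$ and $B(r')\subsetneq B(r)$) or ($H(r')\subsetneq H(r)$ and $B(r')\subseteq B(r)$). $NF(P)$ is obtained by: 1. removing tautological rules; 2. removing from $B^{--}(r)$ atoms in $B^+(r)$; 3. removing from $H(r)$ atoms in $B^-(r)$; 4. removing rules not minimal in the resulting program. Notation: for a set $S$ of literals, $not\,(S)=\{not\,s:s\in S\}$, $not\,not\,(S)=\{not\,not\,s:s\in S\}$, simplifying $not\,not\,not\,p=not\,p$ and $not\,not\,not\,not\,p=not\,not\,p$. $B^{\setminus q}(r)=B(r)\setminus\{q,not\,q,not\,not\,q\}$, $H^{\setminus q}(r)=H(r)\setminus\{q\}$. For a set of rules $Q$, $D_q(Q)$ is the set of all sets $not\,(\{l_1,\dots,l_m\})\cup not\,not\,(\{l_{m+1},\dots,l_n\})$ where $\langle\{r_1,\dots,r_m\},\{r_{m+1},\dots,r_n\}\rangle$ is a partition of $Q$ (parts possibly empty), $l_i\in B^{\setminus q}(r_i)$ for $i\le m$, $l_j\in H^{\setminus q}(r_j)$ for $j>m$ (so $D_q(\emptyset)=\{\emptyset\}$). The operator $f_{SP}$: let $P'=NF(P)$, $R=\{r\in P': q\notin\Sigma(r)\}$, $R_0=\{r\in P':q\in B(r)\}$, $R_1=\{r\in P': not\,q\in B(r)\}$,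 $R_2=\{r\in P': not\,not\,q\in B(r), q\notin H(r)\}$, $R_3=\{r\in P': not\,not\,q\in B(r), q\in H(r)\}$, $R_4=\{r\in P': not\,not\,q\notin B(r), q\in H(r)\}$. $P''$ consists of: every $r\in R$; and (1a) for $r_0\in R_0$, $r_4\in R_4$: $H(r_0)\cup H^{\setminus q}(r_4)\leftarrow B^{\setminus q}(r_0)\cup B(r_4)$; (2a) for $r_0\in R_0$, $r_3\in R_3$, $r'\in R_1\cup R_4$: $H(r_0)\cup H^{\setminus q}(r_3)\leftarrow B^{\setminus q}(r_0)\cup B^{\setminus q}(r_3)\cup not\,(H^{\setminus q}(r'))\cup not\,not\,(B^{\setminus q}(r'))$; (3a) for $r_0\in R_0$, $r_3\in R_3$, $h\in H(r_0)$, $D\in D_q((R_0\cup R_2)\setminus\{r_0\})$: $H(r_0)\leftarrow B^{\setminus q}(r_0)\cup\{not\,not\,h\}\cup D\cup B^{\setminus q}(r_3)\cup not\,(H^{\setminus q}(r_3))$; (1b) for $r_2\in R_2$, $r_4\in R_4$: $H(r_2)\leftarrow B^{\setminus q}(r_2)\cup not\,(H^{\setminus q}(r_4))\cup not\,not\,(B(r_4))$; (2b) for $r_2\in R_2$, $r_3\in R_3$, $r'\in R_1\cup R_4$: $H(r_2)\leftarrow B^{\setminus q}(r_2)\cup not\,(H^{\setminus q}(r_3)\cup H^{\setminus q}(r'))\cup not\,not\,(B^{\setminus q}(r_3)\cup B^{\setminus q}(r'))$; (3b) for $r_2\in R_2$, $r_3\in R_3$, $h\in H(r_2)$, $D\in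 D_q((R_0\cup R_2)\setminus\{r_2\})$: $H(r_2)\leftarrow B^{\setminus q}(r_2)\cup not\,(H^{\setminus q}(r_3))\cup not\,not\,(B^{\setminus q}(r_3)\cup\{h\})\cup D$; (4) for $r'\in R_1\cup R_4$, $D\in D_q(R_3\cup R_4)$ with $D\cap not\,(B^{\setminus q}(r'))=\emptyset$: $H^{\setminus q}(r')\leftarrow B^{\setminus q}(r')\cup D$; (5) for $r'\in R_1\cup R_4$, $r_3\in R_3$, $r\in R_0\cup R_2$, $D\in D_q(R_4)$ with $D\cap not\,(B^{\setminus q}(r'))=\emptyset$: $H^{\setminus q}(r')\leftarrow B^{\setminus q}(r')\cup not\,(H(r)\cup H^{\setminus q}(r_3))\cup not\,not\,(B^{\setminus q}(r)\cup B^{\setminus q}(r_3))\cup D$; (6) for $r'\in R_1\cup R_4$, $r_3\in R_3$, $h\in H^{\setminus q}(r')$, $D\in D_q((R_1\cup R_4)\setminus\{r'\})$: $H^{\setminus q}(r')\leftarrow B^{\setminus q}(r')\cup not\,(H^{\setminus q}(r_3))\cup not\,not\,(B^{\setminus q}(r_3)\cup\{h\})\cup D$; (7) for $r_0\in R_0$, $r_3,r_3'\in R_3$ with $r_3\ne r_3'$, $D\in D_q((R_0\cup R_2)\setminus\{r_0\})$, $h\in H(r_0)$: $H(r_0)\cup H^{\setminus q}(r_3)\leftarrow B^{\setminus q}(r_0)\cup B^{\setminus q}(r_3)\cup not\,(H^{\setminus q}(r_3'))\cup not\,not\,(B^{\setminus q}(r_3')\cup\{h\})\cup D$. Then $f_{SP}(P,q)=NF(P'')$.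 *)

From HB Require Import structures.
From mathcomp Require Import all_boot.
From mathcomp Require Import finmap.
Set Implicit Arguments. Unset Strict Implicit. Unset Printing Implicit Defensive.
Local Open Scope fset_scope.

Section ASP.
(* The signature Sigma is the type of atoms A. *)
Variable A : choiceType.

(* Literals: b (Pos), not c (Neg), not not d (NNeg). *)
Inductive lit := Pos of A | Neg of A | NNeg of A.

Definition lit_enc (l : lit) : (A + A) + A :=
  match l with Pos a => inl (inl a) | Neg a => inl (inr a) | NNeg a => inr a end.
Definition lit_dec (x : (A + A) + A) : lit :=
  match x with inl (inl a) => Pos a | inl (inr a) => Neg a | inr a => NNeg a end.
Lemma lit_encK : cancel lit_enc lit_dec. Proof. by case. Qed.
HB.instance Definition _ := Choice.copy lit (can_type lit_encK).

Definition atom_of (l : lit) : A := match l with Pos a | Neg a | NNeg a => a end.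
Definition isPos (l : lit) : bool := if l is Pos _ then true else false.

(* not l, with not not not p = not p *)
Definition notL (l : lit) : lit :=
  match l with Pos a => Neg a | Neg a => NNeg a | NNeg a => Neg a end.
(* not not l, with not not not p = not p and not not not not p = not not p *)
Definition nnL (l : lit) : lit :=
  match l with Pos a => NNeg a | Neg a => Neg a | NNeg a => NNeg a end.

Definition rule := ({fset A} * {fset lit})%type.
Definition H (r : rule) : {fset A} := r.1.
Definition B (r : rule) : {fset lit} := r.2.

(* Programs are finite sets of rules; operators below produce sets of rules
   given as predicates. *)
Definition rset := rule -> Prop.
Definition of_prog (P : {fset rule}) : rset := fun r => r \in P.

Definition interp := A -> Prop.

Definition sat_cl (I : interp) (r : rule) : Prop :=
  (forall b, Pos b \in B r -> I b) ->
  (forall c, Neg c \in B r -> ~ I c) ->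
  (forall d, NNeg d \in B r -> I d) ->
  exists a, a \in H r /\ I a.

Definition reduct (P : rset) (Y : interp) : rset := fun r' =>
  exists r, P r /\ (forall c, Neg c \in B r -> ~ Y c) /\
            (forall d, NNeg d \in B r -> Y d) /\
            r' = (H r, [fset l in B r | isPos l]).

Definition HT_model (P : rset) (X Y : interp) : Prop :=
  (forall a, X a -> Y a) /\
  (forall r, P r -> sat_cl Y r) /\
  (forall r, reduct P Y r -> sat_cl X r).

Definition answer_set (P : rset) (Y : interp) : Prop :=
  HT_model P Y Y /\
  ~ (exists X : interp, (forall a, X a -> Y a) /\ (exists a, Y a /\ ~ X a) /\
                        HT_model P X Y).

Definition union (P Q : rset) : rset := fun r => P r \/ Q r.

Definition strongly_equiv (P1 P2 : rset) : Prop :=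
  forall R : {fset rule}, forall Y : interp,
    answer_set (union P1 (of_prog R)) Y <-> answer_set (union P2 (of_prog R)) Y.

Definition tautological (r : rule) : Prop :=
  (exists a, a \in H r /\ Pos a \in B r) \/
  (exists a, Pos a \in B r /\ Neg a \in B r) \/
  (exists a, Neg a \in B r /\ NNeg a \in B r).

Definition simp (r : rule) : rule :=
  ([fset a in H r | Neg a \notin B r],
   [fset l in B r | ~~ (if l is NNeg d then Pos d \in B r else false)]).

Definition minimal_in (Q : rset) (r : rule) : Prop :=
  ~ (exists r', Q r' /\
       ((H r' `<=` H r /\ B r' `<` B r) \/ (H r' `<` H r /\ B r' `<=` B r))).

Definition NF (P : rset) : rset :=
  let P1 : rset := fun r => exists r0, P r0 /\ ~ tautological r0 /\ r = simp r0 in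
  fun r => P1 r /\ minimal_in P1 r.

Variable q : A.

Definition Bq (r : rule) : {fset lit} := [fset l in B r | atom_of l != q].
Definition Hq (r : rule) : {fset A} := H r `\ q.
Definition notA (S : {fset A}) : {fset lit} := [fset Neg a | a in S].
Definition notS (S : {fset lit}) : {fset lit} := [fset notL l | l in S].
Definition nnS (S : {fset lit}) : {fset lit} := [fset nnL l | l in S].

Definition occurs_q (r : rule) : Prop :=
  q \in H r \/ exists l, l \in B r /\ atom_of l = q.

Definition Dq (Q : rset) (D : {fset lit}) : Prop :=
  exists c : rule -> lit,
    (forall r, Q r ->
       (exists l, l \in Bq r /\ c r = notL l) \/
       (exists h, h \in Hq r /\ c r = NNeg h)) /\
    (forall x, x \in D <-> exists r, Q r /\ c r = x).

Definition minus_rule (Q : rset) (r0 : rule) : rset := fun r => Q r /\ r <> r0.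

Definition fSP_pre (P : rset) : rset :=
  let P' := NF P in
  let R0 : rset := fun r => P' r /\ Pos q \in B r in
  let R1 : rset := fun r => P' r /\ Neg q \in B r in
  let R2 : rset := fun r => P' r /\ NNeg q \in B r /\ q \notin H r in
  let R3 : rset := fun r => P' r /\ NNeg q \in B r /\ q \in H r in
  let R4 : rset := fun r => P' r /\ NNeg q \notin B r /\ q \in H r in
  let R14 := union R1 R4 in
  let R02 := union R0 R2 in
  fun r =>
  (P' r /\ ~ occurs_q r)
  \/ (exists r0 r4, R0 r0 /\ R4 r4 /\
        r = (H r0 `|` Hq r4, Bq r0 `|` B r4))
  \/ (exists r0 r3 r', R0 r0 /\ R3 r3 /\ R14 r' /\
        r = (H r0 `|` Hq r3,
             Bq r0 `|` Bq r3 `|` notA (Hq r') `|` nnS (Bq r')))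
  \/ (exists r0 r3 h D, R0 r0 /\ R3 r3 /\ h \in H r0 /\ Dq (minus_rule R02 r0) D /\
        r = (H r0,
             Bq r0 `|` [fset NNeg h] `|` D `|` Bq r3 `|` notA (Hq r3)))
  \/ (exists r2 r4, R2 r2 /\ R4 r4 /\
        r = (H r2, Bq r2 `|` notA (Hq r4) `|` nnS (B r4)))
  \/ (exists r2 r3 r', R2 r2 /\ R3 r3 /\ R14 r' /\
        r = (H r2, Bq r2 `|` notA (Hq r3 `|` Hq r') `|` nnS (Bq r3 `|` Bq r')))
  \/ (exists r2 r3 h D, R2 r2 /\ R3 r3 /\ h \in H r2 /\ Dq (minus_rule R02 r2) D /\
        r = (H r2,
             Bq r2 `|` notA (Hq r3) `|` nnS (Bq r3 `|` [fset Pos h]) `|` D))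
  \/ (exists r' D, R14 r' /\ Dq (union R3 R4) D /\ D `&` notS (Bq r') = fset0 /\
        r = (Hq r', Bq r' `|` D))
  \/ (exists r' r3 r0 D, R14 r' /\ R3 r3 /\ R02 r0 /\ Dq R4 D /\
        D `&` notS (Bq r') = fset0 /\
        r = (Hq r',
             Bq r' `|` notA (H r0 `|` Hq r3) `|` nnS (Bq r0 `|` Bq r3) `|` D))
  \/ (exists r' r3 h D, R14 r' /\ R3 r3 /\ h \in Hq r' /\ Dq (minus_rule R14 r') D /\
        r = (Hq r',
             Bq r' `|` notA (Hq r3) `|` nnS (Bq r3 `|` [fset Pos h]) `|` D))
  \/ (exists r0 r3 r3' D h, R0 r0 /\ R3 r3 /\ R3 r3' /\ r3 <> r3' /\
        Dq (minus_rule R02 r0) D /\ h \in H r0 /\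
        r = (H r0 `|` Hq r3,
             Bq r0 `|` Bq r3 `|` notA (Hq r3') `|` nnS (Bq r3' `|` [fset Pos h])
             `|` D)).

Definition fSP (P : rset) : rset := NF (fSP_pre P).

End ASP.

(* Both sides are compared through here-and-there logic.  Finite programs are
   strongly equivalent iff they have the same HT-models (Lifschitz, Pearce and
   Valverde); for the nontrivial direction, an HT-model <X, Y> of P1 that is not one
   of P2 is turned into a program R (the facts X and the rules a <- b for a, b in
   Y \ X) such that Y is an answer set of P2 u R but not of P1 u R.

   The core is a description of the HT-models of f_SP(P, q) through those of P.
   Write Y' = Y \ {q}, X' = X \ {q} and Y'+q = Y' u {q}.  Then <X, Y> is an HT-model
   of f_SP(P, q) iff X <= Y and
   - <Y', Y'> |= P, or else <Y'+q, Y'+q> |= P and <Y', Y'+q> |/= P;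
   - if <Y', Y'> |= P then <X', Y'> |= P;
   - in the second case, <X', Y'+q> |= P or <X'+q, Y'+q> |= P.
   Since this refers to P only through its HT-models, f_SP(P, q) and f_SP(P', q)
   have the same HT-models whenever P and P' do.  To prove the description, the
   rules of NF(P) are sorted into R0, ..., R4, R according to how q occurs in
   them; at each of the interpretations above a rule of NF(P) amounts to a q-free
   implication, and every rule scheme (1a)-(7) of f_SP is then checked against
   these implications, the bodies D_q providing the witnesses in the converse
   direction. *)

From mathcomp Require Import all_boot finmap zify.
From Stdlib Require Import Classical ClassicalEpsilon.
From Stdlib Require Import PropExtensionality FunctionalExtensionality.
Set Implicit Arguments. Unset Strict Implicit. Unset Printing Implicit Defensive.
Local Open Scope fset_scope.

Lemma not_all_imply (T : Type) (K b h : T -> Prop) :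
  ~ (forall x, K x -> b x -> h x) -> exists x, [/\ K x, b x & ~ h x].
Proof.
move=> nall; apply: NNPP => nex; apply: nall => x Kx bx.
by apply: NNPP => nhx; apply: nex; exists x.
Qed.

Definition fset_sep (T : choiceType) (S : {fset T}) (Q : T -> Prop) : {fset T} :=
  [fset x in S | if excluded_middle_informative (Q x) then true else false].

Lemma in_fset_sep (T : choiceType) (S : {fset T}) (Q : T -> Prop) x :
  x \in fset_sep S Q <-> x \in S /\ Q x.
Proof.
rewrite !inE; case: excluded_middle_informative => Qx; rewrite ?andbT ?andbF.
- by split=> [|[]].
- by split=> // -[].
Qed.

(** * Here-and-there satisfaction *)

Section Satisfaction.
Variable A : choiceType.
Implicit Types (U W X Y Z : interp A) (r : rule A) (S : {fset lit A}) (T : {fset A}).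

Definition lit_holds U W (l : lit A) : Prop :=
  match l with Pos a => U a | Neg a => ~ W a | NNeg a => W a end.
Definition body_holds U W S : Prop := forall l, l \in S -> lit_holds U W l.
Definition head_holds U T : Prop := exists a, a \in T /\ U a.
Definition rule_holds U W r : Prop := body_holds U W (B r) -> head_holds U (H r).
Definition ht_model (P : rset A) X Y : Prop :=
  (forall a, X a -> Y a) /\ forall r, P r -> rule_holds Y Y r /\ rule_holds X Y r.

Lemma HT_modelE P X Y : HT_model P X Y <-> ht_model P X Y.
Proof.
split.
- move=> [XY [PY PX]]; split=> // r Pr; split.
  + move=> hb; apply: (PY r Pr).
    * by move=> b /hb.
    * by move=> c /hb.
    * by move=> d /hb.
  + move=> hb.
    have := PX (H r, [fset l in B r | isPos l]).
    case.
    * by exists r; split=> //; split; [move=> c /hb|split=> // d /hb].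
    * by move=> b /=; rewrite !inE /= andbT => /hb.
    * by move=> c /=; rewrite !inE /= andbF.
    * by move=> d /=; rewrite !inE /= andbF.
    * by move=> a [ha Xa]; exists a.
- move=> [XY HP]; split=> //; split.
  + move=> r Pr hp hn hnn; case: (HP r Pr) => [hY _]; apply: hY.
    by case=> a; [apply: hp|apply: hn|apply: hnn].
  + move=> r' [r [Pr [hn [hnn ->]]]] hp hn' hnn'.
    case: (HP r Pr) => [_ hX].
    have [a [ha Xa]] : head_holds X (H r).
      apply: hX; case=> a al /=; [apply: hp| apply: hn| apply: hnn] => //.
      by rewrite /= !inE al.
    by exists a.
Qed.

Lemma ht_model_split (P : rset A) X Y : ht_model P X Y <->
  [/\ forall a, X a -> Y a, forall r, P r -> rule_holds Y Y r
    & forall r, P r -> rule_holds X Y r].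
Proof.
split; first by move=> [XY hP]; split=> // r /hP [].
by move=> [XY hY hX]; split=> // r Pr; split; [apply: hY|apply: hX].
Qed.

Lemma ht_model_there (P : rset A) X Y : ht_model P X Y -> ht_model P Y Y.
Proof. by move=> [_ hP]; split=> // r /hP []. Qed.

Lemma ht_model_union (P R : rset A) X Y :
  ht_model (union P R) X Y <-> ht_model P X Y /\ ht_model R X Y.
Proof.
split.
- by move=> [XY h]; split; split=> // r hr; apply: h; [left|right].
- by move=> [[XY h1] [_ h2]]; split=> // r [/h1|/h2].
Qed.

Lemma body_holdsU U W S1 S2 :
  body_holds U W (S1 `|` S2) = (body_holds U W S1 /\ body_holds U W S2).
Proof.
apply: propositional_extensionality; split.
- by move=> h; split=> l hl; apply: h; rewrite inE hl ?orbT.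
- by move=> [h1 h2] l; rewrite inE => /orP [/h1|/h2].
Qed.

Lemma head_holdsU U T1 T2 :
  head_holds U (T1 `|` T2) = (head_holds U T1 \/ head_holds U T2).
Proof.
apply: propositional_extensionality; split.
- by move=> [a [/[!inE] /orP [h|h] Ua]]; [left|right]; exists a.
- by case=> [[a [h Ua]]|[a [h Ua]]]; exists a; rewrite inE h ?orbT.
Qed.

Lemma body_holds1 U W l : body_holds U W [fset l] = lit_holds U W l.
Proof.
apply: propositional_extensionality; split; first by apply; rewrite inE.
by move=> h l'; rewrite inE => /eqP ->.
Qed.

Lemma body_holds_notA U W T : body_holds U W (notA T) = ~ head_holds W T.
Proof.
apply: propositional_extensionality; split.
- by move=> h [a [ha Wa]]; apply: (h (Neg a) (in_imfset _ _ ha)).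
- by move=> h l /imfsetP [a /= ha ->] Wa; apply: h; exists a.
Qed.

Lemma body_holds_nnS U W S : body_holds U W (nnS S) = body_holds W W S.
Proof.
apply: propositional_extensionality; split.
- by move=> h l hl; have := h (nnL l) (in_imfset _ _ hl); case: l hl.
- by move=> h l /imfsetP [l' /= hl' ->]; have := h l' hl'; case: l' hl'.
Qed.

Lemma lit_holds_notL U Y l : lit_holds U Y (notL l) <-> ~ lit_holds Y Y l.
Proof. by case: l => a /=; split=> //; [move=> ? ?|apply: NNPP]. Qed.

Definition agree_on (D : A -> Prop) U U' := forall a, D a -> (U a <-> U' a).

Lemma agree_on_sym D U U' : agree_on D U U' -> agree_on D U' U.
Proof. by move=> h a /h; tauto. Qed.

Lemma body_holds_agree D S U W U' W' : (forall l, l \in S -> D (atom_of l)) ->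
  agree_on D U U' -> agree_on D W W' -> body_holds U W S -> body_holds U' W' S.
Proof.
move=> hS eU eW hb l hl; have := hb l hl; have := hS l hl.
by case: l hl => a _ /= /[dup] /eU h1 /eW h2; rewrite ?h1 ?h2.
Qed.

Lemma head_holds_agree D T U U' : (forall a, a \in T -> D a) ->
  agree_on D U U' -> head_holds U T -> head_holds U' T.
Proof. by move=> hT eU [a [ha Ua]]; exists a; split=> //; apply/(eU a (hT a ha)). Qed.

Lemma rule_holds_agree D r U W U' W' :
  (forall a, a \in H r -> D a) -> (forall l, l \in B r -> D (atom_of l)) ->
  agree_on D U U' -> agree_on D W W' -> rule_holds U W r -> rule_holds U' W' r.
Proof.
move=> hH hB eU eW hr hb; apply: (head_holds_agree hH eU); apply: hr.
exact: (body_holds_agree hB (agree_on_sym eU) (agree_on_sym eW) hb).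
Qed.

End Satisfaction.

(** * Normal form *)

Section NormalForm.
Variable A : choiceType.
Implicit Types (U W X Y : interp A) (r : rule A) (Q : rset A).

Lemma rule_holds_tautological U W r :
  (forall a, U a -> W a) -> tautological r -> rule_holds U W r.
Proof.
move=> UW [[a [ha hb]]|[[a [h1 h2]]|[a [h1 h2]]]] hB.
- by exists a; split=> //; apply: (hB _ hb).
- by exfalso; apply: (hB _ h2); apply: UW; apply: (hB _ h1).
- by exfalso; apply: (hB _ h1); apply: (hB _ h2).
Qed.

Lemma rule_holds_simp U W r :
  (forall a, U a -> W a) -> rule_holds U W (simp r) <-> rule_holds U W r.
Proof.
move=> UW; rewrite /rule_holds /simp /=; split.
- move=> hs hB.
  have [a [ha Ua]] : head_holds U [fset a in H r | Neg a \notin B r].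
    by apply: hs => l; rewrite !inE /= => /andP [/hB].
  by exists a; move: ha; rewrite !inE /= => /andP [].
- move=> hr hB.
  have hB' : body_holds U W (B r).
    move=> l lB; case: (boolP (if l is NNeg d then Pos d \in B r else false)) => hl.
    + move: hl; case: l lB => // d lB hd /=.
      by apply: UW; apply: (hB (Pos d)); rewrite !inE /= hd.
    + by apply: hB; rewrite !inE /= lB hl.
  have [a [ha Ua]] := hr hB'.
  exists a; split => //; rewrite !inE /= ha /=; apply/negP => hn.
  by have := hB (Neg a); rewrite !inE /= hn /= => /(_ isT); apply; apply: UW.
Qed.

Lemma rule_holds_sub U W r r' : H r' `<=` H r -> B r' `<=` B r ->
  rule_holds U W r' -> rule_holds U W r.
Proof.
move=> /fsubsetP hH /fsubsetP hB hr hb.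
have [a [ha Ua]] : head_holds U (H r') by apply: hr => l /hB /hb.
by exists a; split=> //; apply: hH.
Qed.

Definition rule_size r := (#|` H r| + #|` B r|)%N.

Lemma not_minimal_in Q r : ~ minimal_in Q r ->
  exists r', [/\ Q r', H r' `<=` H r, B r' `<=` B r & (rule_size r' < rule_size r)%N].
Proof.
move=> /NNPP [r' [Qr' sub_r']]; exists r'; rewrite /rule_size.
case: sub_r' => [[sH ltB]|[ltH sB]]; split=> //.
- exact: fproper_sub.
- by have := fsubset_leq_card sH; have := fproper_ltn_card ltB; lia.
- exact: fproper_sub.
- by have := fproper_ltn_card ltH; have := fsubset_leq_card sB; lia.
Qed.

Lemma exists_minimal_below Q r : Q r ->
  exists r', [/\ Q r', minimal_in Q r', H r' `<=` H r & B r' `<=` B r].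
Proof.
have [n] : exists n, (rule_size r <= n)%N by exists (rule_size r).
elim: n r => [|n IH] r le_rn Qr; have [min_r|] := classic (minimal_in Q r);
  try by exists r; rewrite !fsubset_refl.
all: move=> /not_minimal_in [r' [Qr' sH sB lt_r'r]].
  by have := leq_trans lt_r'r le_rn.
have [r'' [Qr'' min_r'' sH' sB']] := IH r' (leq_trans lt_r'r le_rn) Qr'.
by exists r''; split=> //; apply: fsubset_trans; eassumption.
Qed.

Lemma rule_holds_NF Q U W : (forall a, U a -> W a) ->
  (forall r, NF Q r -> rule_holds U W r) <-> (forall r, Q r -> rule_holds U W r).
Proof.
move=> UW; split=> [hN r Qr|hQ r [[r0 [Qr0 [_ ->]]] _]]; last first.
  by apply/(rule_holds_simp _ UW); apply: hQ.
have [/(rule_holds_tautological UW) //|ntaut] := classic (tautological r).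
pose P1 : rset A := fun r => exists r0, Q r0 /\ ~ tautological r0 /\ r = simp r0.
have [r' [P1r' min_r' sH sB]] : exists r', [/\ P1 r', minimal_in P1 r',
    H r' `<=` H (simp r) & B r' `<=` B (simp r)].
  by apply: exists_minimal_below; exists r.
by apply/(rule_holds_simp _ UW); apply: (rule_holds_sub sH sB); apply: hN.
Qed.

Lemma ht_model_NF Q X Y : ht_model (NF Q) X Y <-> ht_model Q X Y.
Proof.
rewrite !ht_model_split; split=> -[XY hY hX]; split=> //.
- exact/(rule_holds_NF Q (fun a (y : Y a) => y)).
- exact/(rule_holds_NF Q XY).
- exact/(rule_holds_NF Q (fun a (y : Y a) => y)).
- exact/(rule_holds_NF Q XY).
Qed.

Lemma NF_rule_lits Q r : NF Q r ->
  (forall a, Pos a \in B r -> [/\ a \notin H r, Neg a \notin B r & NNeg a \notin B r]) /\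
  (forall a, Neg a \in B r -> a \notin H r /\ NNeg a \notin B r).
Proof.
move=> [[r0 [_ [ntaut ->]]] _]; rewrite /simp /H /B /=.
split=> a; rewrite !inE /= => /andP [h1 h2].
- split; apply/negP.
  + by move=> /andP [h3 h4]; apply: ntaut; left; exists a.
  + by move=> /andP [h3 h4]; apply: ntaut; right; left; exists a.
  + by move=> /andP [h3]; rewrite h1.
- split; apply/negP.
  + by move=> /andP [h3]; rewrite h1.
  + by move=> /andP [h3 h4]; apply: ntaut; right; right; exists a.
Qed.

Lemma NF_of_prog (P : {fset rule A}) r :
  NF (of_prog P) r -> r \in [fset simp r0 | r0 in P].
Proof. by move=> [[r0 [Pr0 [_ ->]]] _]; apply: in_imfset. Qed.

End NormalForm.

(** * Strong equivalence and HT-models *)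

Section StrongEquivalence.
Variable A : choiceType.
Implicit Types (U W X Y Z : interp A) (r : rule A).

Lemma strongly_equiv_sym (P1 P2 : rset A) :
  strongly_equiv P1 P2 -> strongly_equiv P2 P1.
Proof. by move=> h R Y; split=> /h. Qed.

Lemma ht_equiv_strongly_equiv (P1 P2 : rset A) :
  (forall X Y, ht_model P1 X Y <-> ht_model P2 X Y) -> strongly_equiv P1 P2.
Proof.
move=> eqP R Y.
have eqPR X : HT_model (union P1 (of_prog R)) X Y <-> HT_model (union P2 (of_prog R)) X Y.
  by rewrite !HT_modelE !ht_model_union eqP.
split=> -[hY hmin]; split; try exact/eqPR;
  by move=> [X [XY [nYX hX]]]; apply: hmin; exists X; do 2![split=> //]; apply/eqPR.
Qed.

Lemma of_progU (P R : {fset rule A}) : of_prog (P `|` R) = union (of_prog P) (of_prog R).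
Proof.
apply: functional_extensionality => r; apply: propositional_extensionality.
by rewrite /of_prog /union inE; split=> [/orP|[]->]; rewrite ?orbT.
Qed.

Definition atoms_of_rule r : {fset A} := H r `|` [fset atom_of l | l in B r].
Definition atoms_of_prog (P : {fset rule A}) : {fset A} :=
  \bigcup_(r <- P) atoms_of_rule r.

Lemma atoms_of_progP (P : {fset rule A}) r : r \in P ->
  (forall a, a \in H r -> a \in atoms_of_prog P) /\
  (forall l, l \in B r -> atom_of l \in atoms_of_prog P).
Proof.
move=> rP; have /fsubsetP sub : atoms_of_rule r `<=` atoms_of_prog P by exact: bigfcup_sup.
by split=> [a ha|l hl]; apply: sub; rewrite inE ?ha ?in_imfset ?orbT.
Qed.

Definition facts (Xs : {fset A}) : {fset rule A} := [fset ([fset a], fset0) | a in Xs].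
Definition pairs (Ds : {fset A}) : {fset rule A} :=
  [fset ([fset p.1], [fset Pos p.2]) | p in Ds `*` Ds].

Lemma ht_model_facts (Xs : {fset A}) Z W : (forall a, Z a -> W a) ->
  ht_model (of_prog (facts Xs)) Z W <-> forall a, a \in Xs -> Z a.
Proof.
move=> ZW; split.
- move=> [_ hF] a aXs.
  have [b [/[!inE] /eqP -> //]] : head_holds Z [fset a].
  by apply: (hF _ (in_imfset _ _ aXs)).2 => l; rewrite inE.
- move=> hXs; split=> // r /imfsetP [a /= aXs ->].
  by split=> _; exists a; rewrite inE eqxx; split=> //; [apply: ZW|]; apply: hXs.
Qed.

Lemma ht_model_pairs (Ds : {fset A}) Z W :
  (forall a, Z a -> W a) -> (forall a, a \in Ds -> W a) ->
  ht_model (of_prog (pairs Ds)) Z W <->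
  forall a b, a \in Ds -> b \in Ds -> Z b -> Z a.
Proof.
move=> ZW DsW; split.
- move=> [_ hR] a b aDs bDs Zb.
  have rR : ([fset a], [fset Pos b]) \in pairs Ds.
    by apply/imfsetP; exists (a, b); rewrite //= in_fsetM aDs bDs.
  have [c [/[!inE] /eqP -> //]] : head_holds Z [fset a].
  by apply: (hR _ rR).2 => l; rewrite inE => /eqP ->.
- move=> hD; split=> // r /imfsetP [[a b] /=]; rewrite in_fsetM => /andP [aDs bDs] ->.
  split=> hb; exists a; rewrite inE eqxx; split=> //; first exact: DsW.
  by apply: (hD a b) => //; apply: (hb (Pos b)); rewrite inE.
Qed.

Lemma answer_set_facts (P : rset A) (Ys : {fset A}) (Y := fun a => a \in Ys) :
  ht_model P Y Y -> answer_set (union P (of_prog (facts Ys))) Y.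
Proof.
move=> hP; split.
- by apply/HT_modelE/ht_model_union; split=> //; apply/ht_model_facts.
- move=> [X [XY [[a [Ya nXa]] /HT_modelE /ht_model_union [_ /(ht_model_facts _ XY) hX]]]].
  exact/nXa/hX.
Qed.

Section Transfer.
Variables P1 P2 : {fset rule A}.
Hypothesis P12 : strongly_equiv (of_prog P1) (of_prog P2).

(* Interpretations only matter on the finitely many atoms of P1 and P2; restricting
   to them makes the programs built below finite. *)
Let inSg a := a \in atoms_of_prog (P1 `|` P2).
Let restrict X : interp A := fun a => a \in fset_sep (atoms_of_prog (P1 `|` P2)) X.

Lemma restrictE X a : restrict X a <-> inSg a /\ X a.
Proof. exact: in_fset_sep. Qed.

Lemma agree_restrict X : agree_on inSg X (restrict X).
Proof. by move=> a Sa; rewrite restrictE; tauto. Qed.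

Lemma ht_model_agree (P : {fset rule A}) X Y X' Y' : P `<=` P1 `|` P2 ->
  agree_on inSg X X' -> agree_on inSg Y Y' -> (forall a, X' a -> Y' a) ->
  ht_model (of_prog P) X Y -> ht_model (of_prog P) X' Y'.
Proof.
move=> /fsubsetP sP eX eY XY' [_ hP]; split=> // r Pr.
have [hH hB] := atoms_of_progP (sP r Pr).
have [hYY hXY] := hP r Pr; split.
- exact: (rule_holds_agree (D := inSg) hH hB eY eY hYY).
- exact: (rule_holds_agree (D := inSg) hH hB eX eY hXY).
Qed.

Lemma ht_model_there_transfer Y :
  ht_model (of_prog P1) Y Y -> ht_model (of_prog P2) Y Y.
Proof.
move=> hY1; have eY := agree_restrict Y.
have YY' a : restrict Y a -> restrict Y a by [].
have /P12 [/HT_modelE /ht_model_union [hY2 _] _] :=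
  answer_set_facts (ht_model_agree (fsubsetUl P1 P2) eY eY YY' hY1).
exact: (ht_model_agree (fsubsetUr P1 P2) (agree_on_sym eY) (agree_on_sym eY)).
Qed.

Section Witness.
Variables X Y : interp A.
Hypothesis hXY1 : ht_model (of_prog P1) X Y.
Hypothesis hYY2 : ht_model (of_prog P2) Y Y.
Hypothesis nXY2 : ~ ht_model (of_prog P2) X Y.

(* The program R of Lifschitz, Pearce and Valverde: the facts X and all rules a <- b
   with a, b in Y \ X. *)
Let Ds := fset_sep (atoms_of_prog (P1 `|` P2)) (fun a => Y a /\ ~ X a).
Let R := facts (fset_sep (atoms_of_prog (P1 `|` P2)) X) `|` pairs Ds.

Let XY : forall a, X a -> Y a := hXY1.1.

Lemma in_Ds a : a \in Ds <-> restrict Y a /\ ~ restrict X a.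
Proof. by rewrite in_fset_sep !restrictE; tauto. Qed.

Lemma restrict_sub : forall a, restrict X a -> restrict Y a.
Proof. by move=> a /restrictE [Sa /XY Ya]; apply/restrictE. Qed.

Lemma ht_model_R Z : (forall a, Z a -> restrict Y a) ->
  ht_model (of_prog R) Z (restrict Y) <->
  (forall a, restrict X a -> Z a) /\ (forall a b, a \in Ds -> b \in Ds -> Z b -> Z a).
Proof.
move=> ZY; rewrite of_progU ht_model_union ht_model_facts // ht_model_pairs //.
  by move=> a /in_Ds [].
Qed.

Lemma agree_on_Ds_free Z : (forall a, Z a -> restrict Y a) ->
  (forall a, restrict X a -> Z a) -> (forall b, b \in Ds -> ~ Z b) -> agree_on inSg Z X.
Proof.
move=> ZY XZ nDsZ a Sa; split=> [Za|Xa]; last by apply/XZ/restrictE.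
apply: NNPP => nXa; apply: (nDsZ a) => //; apply/in_Ds; split; first exact: ZY.
by move/restrictE => [].
Qed.

Lemma exists_Ds : exists d, d \in Ds.
Proof.
apply: NNPP => nDs; apply: nXY2.
have eYX : agree_on inSg (restrict Y) X.
  apply: agree_on_Ds_free => // [a /restrict_sub //|b bDs]; by case: nDs; exists b.
apply: (ht_model_agree (fsubsetUr P1 P2) _ (fun a _ => iff_refl (Y a)) XY hYY2).
by move=> a Sa; rewrite (agree_restrict Y Sa); apply: eYX.
Qed.

Lemma not_answer_set_P1R : ~ answer_set (union (of_prog P1) (of_prog R)) (restrict Y).
Proof.
move=> [_]; apply; exists (restrict X); split; first exact: restrict_sub.
split; first by have [d /in_Ds [Yd nXd]] := exists_Ds; exists d.
apply/HT_modelE/ht_model_union; split.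
  exact: (ht_model_agree (fsubsetUl P1 P2) (agree_restrict X) (agree_restrict Y) restrict_sub hXY1).
apply/ht_model_R; first exact: restrict_sub.
by split=> // a b /in_Ds [_ nXa] /in_Ds [_ nXb].
Qed.

Lemma answer_set_P2R : answer_set (union (of_prog P2) (of_prog R)) (restrict Y).
Proof.
have eY := agree_restrict Y.
split.
  apply/HT_modelE/ht_model_union; split; first exact: (ht_model_agree (fsubsetUr P1 P2) eY eY (fun a h => h) hYY2).
  by apply/ht_model_R => //; split=> [a /restrict_sub|a b /in_Ds []].
move=> [Z [ZY [[a [Ya nZa]] /HT_modelE /ht_model_union [hZ2 /(ht_model_R ZY) [XZ DsZ]]]]].
have [[b [bDs Zb]]|nDsZ] := classic (exists b, b \in Ds /\ Z b).
  have [/XZ //|nXa] := classic (restrict X a).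
  by apply/nZa/(DsZ a b) => //; apply/in_Ds.
apply: nXY2; have eZX := agree_on_Ds_free ZY XZ (fun b bDs Zb => nDsZ (ex_intro _ b (conj bDs Zb))).
exact: (ht_model_agree (fsubsetUr P1 P2) eZX (agree_on_sym eY) XY hZ2).
Qed.

End Witness.

Lemma ht_model_transfer X Y : ht_model (of_prog P1) X Y -> ht_model (of_prog P2) X Y.
Proof.
move=> hXY1; apply: NNPP => nXY2.
have hYY2 := ht_model_there_transfer (ht_model_there hXY1).
apply: (not_answer_set_P1R hXY1 hYY2 nXY2).
exact/P12/(answer_set_P2R hXY1 hYY2 nXY2).
Qed.

End Transfer.

Lemma strongly_equiv_ht_equiv (P1 P2 : {fset rule A}) :
  strongly_equiv (of_prog P1) (of_prog P2) ->
  forall X Y, ht_model (of_prog P1) X Y <-> ht_model (of_prog P2) X Y.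
Proof.
move=> P12 X Y; split; first exact: (ht_model_transfer P12).
exact: (ht_model_transfer (strongly_equiv_sym P12)).
Qed.

End StrongEquivalence.

(** * HT-models of f_SP *)

Section Forgetting.
Variables (A : choiceType) (q : A) (P0 : {fset rule A}).
Implicit Types (U W X Y Z : interp A) (r : rule A) (S : {fset lit A}) (T : {fset A}).

(* These unfold to the let-bound R0, ..., R4 and R of [fSP_pre q (of_prog P0)]. *)
Definition NFP : rset A := NF (of_prog P0).
Definition R0 r := NFP r /\ Pos q \in B r.
Definition R1 r := NFP r /\ Neg q \in B r.
Definition R2 r := NFP r /\ NNeg q \in B r /\ q \notin H r.
Definition R3 r := NFP r /\ NNeg q \in B r /\ q \in H r.
Definition R4 r := NFP r /\ NNeg q \notin B r /\ q \in H r.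
Definition Rfree r := NFP r /\ ~ occurs_q q r.

Lemma occurs_qE r : occurs_q q r <->
  [\/ q \in H r, Pos q \in B r, Neg q \in B r | NNeg q \in B r].
Proof.
split.
- case=> [|[l [hl <-]]]; first by constructor 1.
  by case: l hl => a hl; [constructor 2|constructor 3|constructor 4].
- by case=> h; [left|right; exists (Pos q)|right; exists (Neg q)|right; exists (NNeg q)].
Qed.

Lemma Rfree_of_lits r : NFP r -> Pos q \notin B r -> Neg q \notin B r ->
  NNeg q \notin B r -> q \notin H r -> Rfree r.
Proof.
move=> NFr /negP h1 /negP h2 /negP h3 /negP h4; split=> //.
by move=> /occurs_qE [].
Qed.

Lemma R0_lits r : R0 r -> [/\ Neg q \notin B r, NNeg q \notin B r & q \notin H r].
Proof. by move=> [/NF_rule_lits [h _] /h [? ? ?]]. Qed.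

Lemma R1_lits r : R1 r -> [/\ Pos q \notin B r, NNeg q \notin B r & q \notin H r].
Proof.
move=> [/NF_rule_lits [h1 h2] hn]; have [? ?] := h2 _ hn; split=> //.
by apply/negP => /h1 [_ /negP].
Qed.

Lemma NNeg_q_lits r : NFP r -> NNeg q \in B r -> Pos q \notin B r /\ Neg q \notin B r.
Proof.
move=> /NF_rule_lits [h1 h2] hn; split; apply/negP.
- by move=> /h1 [_ _ /negP].
- by move=> /h2 [_ /negP].
Qed.

Lemma R2_lits r : R2 r -> Pos q \notin B r /\ Neg q \notin B r.
Proof. by move=> [NFr [hn _]]; apply: NNeg_q_lits. Qed.

Lemma R3_lits r : R3 r -> Pos q \notin B r /\ Neg q \notin B r.
Proof. by move=> [NFr [hn _]]; apply: NNeg_q_lits. Qed.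

Lemma R4_lits r : R4 r -> Pos q \notin B r /\ Neg q \notin B r.
Proof.
move=> [/NF_rule_lits [h1 h2] [_ hq]]; split; apply/negP.
- by move=> /h1 [/negP].
- by move=> /h2 [/negP].
Qed.

Lemma Rfree_lits r : Rfree r ->
  [/\ Pos q \notin B r, Neg q \notin B r, NNeg q \notin B r & q \notin H r].
Proof.
move=> [_ nocc]; split; apply/negP => h; apply: nocc; apply/occurs_qE.
- by constructor 2.
- by constructor 3.
- by constructor 4.
- by constructor 1.
Qed.

Definition q_free_body S := forall l, l \in S -> atom_of l != q.

Lemma q_free_Bq r : q_free_body (Bq q r).
Proof. by move=> l; rewrite !inE /= => /andP []. Qed.

Lemma q_notin_Hq r : q \notin Hq q r.
Proof. by rewrite !inE eqxx. Qed.

Lemma neq_q_of_notin T : q \notin T -> forall a, a \in T -> a != q.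
Proof. by move=> qT a aT; apply: contraNneq qT => <-. Qed.

Lemma body_holds_split U W r : body_holds U W (B r) <->
  [/\ body_holds U W (Bq q r), Pos q \in B r -> U q, Neg q \in B r -> ~ W q
    & NNeg q \in B r -> W q].
Proof.
split.
- move=> hb; split; [|exact: hb..].
  by move=> l; rewrite !inE /= => /andP [/hb].
- move=> [hb h1 h2 h3] l hl; case: (eqVneq (atom_of l) q) => e.
  + by case: l hl e => a hl /= e; subst a; [apply: h1|apply: h2|apply: h3].
  + by apply: hb; rewrite !inE /= hl e.
Qed.

Lemma head_holds_split U r : head_holds U (H r) <->
  head_holds U (Hq q r) \/ (q \in H r /\ U q).
Proof.
split.
- move=> [a [ha Ua]]; case: (eqVneq a q) => e.
  + by subst a; right.
  + by left; exists a; rewrite !inE e ha.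
- case=> [[a [ha Ua]]|[h1 h2]].
  + by exists a; move: ha; rewrite !inE => /andP [].
  + by exists q.
Qed.

Definition addq Z : interp A := fun a => Z a \/ a = q.

Lemma agree_addq Z : agree_on (fun a => a != q) (addq Z) Z.
Proof. by move=> a /eqP aq; rewrite /addq; split=> [[]|] //; left. Qed.

Definition rule1a r0 r4 : rule A := (H r0 `|` Hq q r4, Bq q r0 `|` B r4).
Definition rule2a r0 r3 r' : rule A :=
  (H r0 `|` Hq q r3, Bq q r0 `|` Bq q r3 `|` notA (Hq q r') `|` nnS (Bq q r')).
Definition rule3a r0 r3 h D : rule A :=
  (H r0, Bq q r0 `|` [fset NNeg h] `|` D `|` Bq q r3 `|` notA (Hq q r3)).
Definition rule1b r2 r4 : rule A := (H r2, Bq q r2 `|` notA (Hq q r4) `|` nnS (B r4)).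
Definition rule2b r2 r3 r' : rule A :=
  (H r2, Bq q r2 `|` notA (Hq q r3 `|` Hq q r') `|` nnS (Bq q r3 `|` Bq q r')).
Definition rule3b r2 r3 h D : rule A :=
  (H r2, Bq q r2 `|` notA (Hq q r3) `|` nnS (Bq q r3 `|` [fset Pos h]) `|` D).
Definition rule4 r' D : rule A := (Hq q r', Bq q r' `|` D).
Definition rule5 r' r3 r0 D : rule A :=
  (Hq q r', Bq q r' `|` notA (H r0 `|` Hq q r3) `|` nnS (Bq q r0 `|` Bq q r3) `|` D).
Definition rule6 r' r3 h D : rule A :=
  (Hq q r', Bq q r' `|` notA (Hq q r3) `|` nnS (Bq q r3 `|` [fset Pos h]) `|` D).
Definition rule7 r0 r3 r3' D h : rule A :=
  (H r0 `|` Hq q r3,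
   Bq q r0 `|` Bq q r3 `|` notA (Hq q r3') `|` nnS (Bq q r3' `|` [fset Pos h]) `|` D).

Let FP := fSP_pre q (of_prog P0).

Lemma Rfree_in_fSP r : Rfree r -> FP r.
Proof. by left. Qed.

Lemma rule1a_in_fSP r0 r4 : R0 r0 -> R4 r4 -> FP (rule1a r0 r4).
Proof. by move=> h0 h4; right; left; exists r0, r4. Qed.

Lemma rule2a_in_fSP r0 r3 r' : R0 r0 -> R3 r3 -> R1 r' \/ R4 r' -> FP (rule2a r0 r3 r').
Proof. by move=> h0 h3 h'; do 2 right; left; exists r0, r3, r'. Qed.

Lemma rule3a_in_fSP r0 r3 h D : R0 r0 -> R3 r3 -> h \in H r0 ->
  Dq q (minus_rule (union R0 R2) r0) D -> FP (rule3a r0 r3 h D).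
Proof. by move=> h0 h3 hh hD; do 3 right; left; exists r0, r3, h, D. Qed.

Lemma rule1b_in_fSP r2 r4 : R2 r2 -> R4 r4 -> FP (rule1b r2 r4).
Proof. by move=> h2 h4; do 4 right; left; exists r2, r4. Qed.

Lemma rule3b_in_fSP r2 r3 h D : R2 r2 -> R3 r3 -> h \in H r2 ->
  Dq q (minus_rule (union R0 R2) r2) D -> FP (rule3b r2 r3 h D).
Proof. by move=> h2 h3 hh hD; do 6 right; left; exists r2, r3, h, D. Qed.

Lemma rule4_in_fSP r' D : R1 r' \/ R4 r' -> Dq q (union R3 R4) D ->
  D `&` notS (Bq q r') = fset0 -> FP (rule4 r' D).
Proof. by move=> h' hD hd; do 7 right; left; exists r', D. Qed.

Lemma rule5_in_fSP r' r3 r0 D : R1 r' \/ R4 r' -> R3 r3 -> R0 r0 \/ R2 r0 -> Dq q R4 D ->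
  D `&` notS (Bq q r') = fset0 -> FP (rule5 r' r3 r0 D).
Proof. by move=> h' h3 h0 hD hd; do 8 right; left; exists r', r3, r0, D. Qed.

Lemma rule6_in_fSP r' r3 h D : R1 r' \/ R4 r' -> R3 r3 -> h \in Hq q r' ->
  Dq q (minus_rule (union R1 R4) r') D -> FP (rule6 r' r3 h D).
Proof. by move=> h' h3 hh hD; do 9 right; left; exists r', r3, h, D. Qed.

Lemma rule7_in_fSP r0 r3 r3' D h : R0 r0 -> R3 r3 -> R3 r3' -> r3 <> r3' ->
  Dq q (minus_rule (union R0 R2) r0) D -> h \in H r0 -> FP (rule7 r0 r3 r3' D h).
Proof. by move=> h0 h3 h3' ne hD hh; do 10 right; exists r0, r3, r3', D, h. Qed.

(* The condition characterizing the HT-models <X, Y> of f_SP(P, q), stated for X and Y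
   already stripped of q; M stands for the HT-models of P. *)
Definition sp_model (M : interp A -> interp A -> Prop) X Y :=
  (M Y Y \/ (M (addq Y) (addq Y) /\ ~ M Y (addq Y))) /\ (M Y Y -> M X Y) /\
  (M (addq Y) (addq Y) /\ ~ M Y (addq Y) -> M X (addq Y) \/ M (addq X) (addq Y)).

(* [Y] is a candidate "there" world with [q] removed; the rules of NF(P0) are
   evaluated at <Z, Y>, <Z, Y + q> and <Z + q, Y + q>, where they reduce to the
   q-free implications [bodyq Z r -> headq Z r] below. *)
Section Level.
Variable Y : interp A.
Hypothesis nYq : ~ Y q.

Definition bodyq Z r := body_holds Z Y (Bq q r).
Definition headq Z r := head_holds Z (Hq q r).

Lemma bodyq_addq Z r : body_holds (addq Z) (addq Y) (Bq q r) <-> bodyq Z r.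
Proof.
split=> h.
- exact: (body_holds_agree (@q_free_Bq r) (agree_addq Z) (agree_addq Y) h).
- exact: (body_holds_agree (@q_free_Bq r) (agree_on_sym (agree_addq Z))
            (agree_on_sym (agree_addq Y)) h).
Qed.

Lemma bodyq_addqY Z r : body_holds Z (addq Y) (Bq q r) <-> bodyq Z r.
Proof.
have eZ : agree_on (fun a => a != q) Z Z by [].
split=> h.
- exact: (body_holds_agree (@q_free_Bq r) eZ (agree_addq Y) h).
- exact: (body_holds_agree (@q_free_Bq r) eZ (agree_on_sym (agree_addq Y)) h).
Qed.

Lemma headq_addq Z r : head_holds (addq Z) (Hq q r) <-> headq Z r.
Proof.
have Hq_neq := neq_q_of_notin (q_notin_Hq r).
split=> h.
- exact: (head_holds_agree Hq_neq (agree_addq Z) h).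
- exact: (head_holds_agree Hq_neq (agree_on_sym (agree_addq Z)) h).
Qed.

Lemma head_holds_Hq Z r : (forall a, Z a -> Y a) -> head_holds Z (H r) = headq Z r.
Proof.
move=> ZY; apply: propositional_extensionality; rewrite head_holds_split.
by split=> [[//|[_ /ZY]]|]; [|left].
Qed.

Lemma body_holds_R4 U W r : R4 r -> body_holds U W (B r) = body_holds U W (Bq q r).
Proof.
move=> h4; have [/negP np /negP nq] := R4_lits h4; have /negP nnq := h4.2.1.
apply: propositional_extensionality; rewrite body_holds_split.
by split=> [[]|hb] //; split.
Qed.

Lemma rule_holds_qFF Z r : (forall a, Z a -> Y a) -> rule_holds Z Y r <->
  (Pos q \notin B r -> NNeg q \notin B r -> bodyq Z r -> headq Z r).
Proof.
move=> ZY; have nZq : ~ Z q by move/ZY.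
rewrite /rule_holds body_holds_split head_holds_split; split.
- move=> h /negP np /negP nnp hb; case: h => // -[_ //].
- move=> h [hb h1 _ h3]; left; apply: h => //; apply/negP; [move/h1|move/h3] => //.
Qed.

Lemma rule_holds_qFT Z r : (forall a, Z a -> Y a) -> rule_holds Z (addq Y) r <->
  (Pos q \notin B r -> Neg q \notin B r -> bodyq Z r -> headq Z r).
Proof.
move=> ZY; have nZq : ~ Z q by move/ZY.
rewrite /rule_holds body_holds_split head_holds_split; split.
- move=> h /negP np /negP nn hb; case: h => [|//|[_ //]].
  by split; [apply/bodyq_addqY|..] => //; right.
- move=> h [/bodyq_addqY hb h1 h2 _]; left; apply: h => //; apply/negP.
  + by move/h1.
  + by move/h2; apply; right.
Qed.

Lemma rule_holds_qTT Z r : rule_holds (addq Z) (addq Y) r <->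
  (Neg q \notin B r -> bodyq Z r -> headq Z r \/ q \in H r).
Proof.
rewrite /rule_holds body_holds_split head_holds_split; split.
- move=> h /negP nn hb.
  case: h => [|/headq_addq|[]]; [|by left|by right].
  by split; [apply/bodyq_addq|..] => //; right.
- move=> h [/bodyq_addq hb _ h2 _].
  have /h /(_ hb) [/headq_addq|] : Neg q \notin B r by apply/negP => /h2; apply; right.
    by left.
  by right; split=> //; right.
Qed.

(* The suffix gives the truth values of q at <here, there>: these say that NF(P0)
   holds at <Z, Y>, <Z + q, Y + q> and <Z, Y + q> respectively. *)
Definition sat_qFF Z := forall r, [\/ R1 r, R4 r | Rfree r] -> bodyq Z r -> headq Z r.
Definition sat_qTT Z := forall r, [\/ R0 r, R2 r | Rfree r] -> bodyq Z r -> headq Z r.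
Definition sat_qFT Z :=
  forall r, [\/ R2 r, R3 r, R4 r | Rfree r] -> bodyq Z r -> headq Z r.

Lemma NFP_holds_qFF Z : (forall a, Z a -> Y a) ->
  (forall r, NFP r -> rule_holds Z Y r) <-> sat_qFF Z.
Proof.
move=> ZY; split.
- move=> h r hr; have NFr : NFP r by case: hr => -[].
  move: (h r NFr); rewrite (rule_holds_qFF _ ZY); apply.
  + by case: hr => [/R1_lits []|/R4_lits []|/Rfree_lits []].
  + by case: hr => [/R1_lits []|[_ []]|/Rfree_lits []].
- move=> h r NFr; apply/(rule_holds_qFF _ ZY) => np nnp; apply: h.
  have [nq|nq] := boolP (Neg q \in B r); first by constructor 1.
  have [hq|hq] := boolP (q \in H r); first by constructor 2.
  by constructor 3; apply: Rfree_of_lits.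
Qed.

Lemma NFP_holds_qTT Z : (forall r, NFP r -> rule_holds (addq Z) (addq Y) r) <-> sat_qTT Z.
Proof.
split.
- move=> h r hr hb; have NFr : NFP r by case: hr => -[].
  have [nq hq] : Neg q \notin B r /\ q \notin H r.
    by case: hr => [/R0_lits []|h2|/Rfree_lits []] //; split; [exact: (R2_lits h2).2|exact: h2.2.2].
  have /rule_holds_qTT /(_ nq hb) [//|hqH] := h r NFr; by rewrite hqH in hq.
- move=> h r NFr; apply/rule_holds_qTT => nq hb.
  have [hq|hq] := boolP (q \in H r); first by right.
  left; apply: h hb.
  have [pq|pq] := boolP (Pos q \in B r); first by constructor 1.
  have [nnq|nnq] := boolP (NNeg q \in B r); first by constructor 2.
  by constructor 3; apply: Rfree_of_lits.
Qed.

Lemma NFP_holds_qFT Z : (forall a, Z a -> Y a) ->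
  (forall r, NFP r -> rule_holds Z (addq Y) r) <-> sat_qFT Z.
Proof.
move=> ZY; split.
- move=> h r hr; have NFr : NFP r by case: hr => -[].
  move: (h r NFr); rewrite (rule_holds_qFT _ ZY); apply.
  + by case: hr => [/R2_lits []|/R3_lits []|/R4_lits []|/Rfree_lits []].
  + by case: hr => [/R2_lits []|/R3_lits []|/R4_lits []|/Rfree_lits []].
- move=> h r NFr; apply/(rule_holds_qFT _ ZY) => np nq; apply: h.
  have [nnq|nnq] := boolP (NNeg q \in B r).
    by have [hq|hq] := boolP (q \in H r); [constructor 2|constructor 1].
  have [hq|hq] := boolP (q \in H r); first by constructor 3.
  by constructor 4; apply: Rfree_of_lits.
Qed.

Definition sp_cond Z :=
  (sat_qFF Y \/ (sat_qTT Y /\ ~ sat_qFT Y)) /\ (sat_qFF Y -> sat_qFF Z) /\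
  (sat_qTT Y /\ ~ sat_qFT Y -> sat_qFT Z \/ sat_qTT Z).

Lemma bodyq_sub Z r : (forall a, Z a -> Y a) -> bodyq Z r -> bodyq Y r.
Proof. by move=> ZY hb l /hb; case: l => //= a /ZY. Qed.

Lemma headq_sub Z r : (forall a, Z a -> Y a) -> headq Z r -> headq Y r.
Proof. by move=> ZY [a [ha /ZY Ya]]; exists a. Qed.

Lemma headq_of_H h r : h \in H r -> Y h -> headq Y r.
Proof.
move=> hr Yh; exists h; split=> //; rewrite !inE hr andbT.
by apply: contra_notN nYq => /eqP <-.
Qed.

Lemma Dq_sat (Q : rset A) D Z : Dq q Q D -> body_holds Z Y D ->
  forall r, Q r -> bodyq Y r -> headq Y r.
Proof.
move=> [c [hc hD]] hb r Qr br.
have /hb : c r \in D by apply/hD; exists r.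
case: (hc r Qr) => [[l [hl ->]]|[a [ha ->]]] /=.
- by move/lit_holds_notL => []; apply: br.
- by move=> Ya; exists a.
Qed.

(* The chosen literals are negated or doubly negated, so they hold at every <Z, Y>. *)
Lemma exists_Dq_true (Q : rset A) : (forall r, Q r -> NFP r) ->
  (forall r, Q r -> bodyq Y r -> headq Y r) ->
  exists D, Dq q Q D /\ forall Z, body_holds Z Y D.
Proof.
move=> QNF satQ.
have choice r : exists x : lit A, Q r ->
    [/\ (exists l, l \in Bq q r /\ x = notL l) \/ (exists h, h \in Hq q r /\ x = NNeg h),
        lit_holds Y Y x & ~~ isPos x].
  have [Qr|] := classic (Q r); last by exists (NNeg q).
  have [br|nbr] := classic (bodyq Y r).
    by have [a [ha Ya]] := satQ r Qr br; exists (NNeg a) => _; split=> //; right; exists a.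
  have [l [hl nl]] : exists l, l \in Bq q r /\ ~ lit_holds Y Y l.
    by apply: NNPP => nex; apply: nbr => l hl; apply: NNPP => nl; apply: nex; exists l.
  exists (notL l) => _; split; first by left; exists l.
    exact/lit_holds_notL.
  by case: (l).
pose c r := proj1_sig (constructive_indefinite_description _ (choice r)).
have hc r : Q r -> _ := proj2_sig (constructive_indefinite_description _ (choice r)).
pose S := fset_sep [fset simp r0 | r0 in P0] Q.
exists [fset c r | r in S]; split.
- exists c; split=> [r /hc [] //|x]; split.
  + by move=> /imfsetP [r /= /in_fset_sep [_ Qr] ->]; exists r.
  + move=> [r [Qr <-]]; apply: in_imfset; apply/in_fset_sep; split=> //.
    exact/NF_of_prog/QNF.
- move=> Z l /imfsetP [r /= /in_fset_sep [_ Qr] ->].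
  by have [_] := hc r Qr; rewrite /c; case: (proj1_sig _).
Qed.

Lemma disjoint_notS D r : body_holds Y Y D -> bodyq Y r -> D `&` notS (Bq q r) = fset0.
Proof.
move=> hb br; apply/fsetP => x; rewrite !inE.
apply/negP => /andP [xD /imfsetP [l /= hl e]]; subst x.
by have /lit_holds_notL := hb _ xD; apply; apply: br.
Qed.

Lemma Dq_R02_sat_qTT r0 h D Z : sat_qFF Y -> h \in H r0 -> Y h ->
  Dq q (minus_rule (union R0 R2) r0) D -> body_holds Z Y D -> sat_qTT Y.
Proof.
move=> hFF hr0 Yh hD bD r hr br.
have [->|ne] := classic (r = r0); first exact: headq_of_H hr0 Yh.
case: hr => [h0|h2|hfree].
- by apply: (Dq_sat hD bD) br; split=> //; left.
- by apply: (Dq_sat hD bD) br; split=> //; right.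
- by apply: hFF br; constructor 3.
Qed.

Lemma Dq_R14_sat_qFF r' h D Z : sat_qTT Y -> h \in Hq q r' -> Y h ->
  Dq q (minus_rule (union R1 R4) r') D -> body_holds Z Y D -> sat_qFF Y.
Proof.
move=> hTT hr' Yh hD bD r hr br.
have [->|ne] := classic (r = r'); first by exists h.
case: hr => [h1|h4|hfree].
- by apply: (Dq_sat hD bD) br; split=> //; left.
- by apply: (Dq_sat hD bD) br; split=> //; right.
- by apply: hTT br; constructor 3.
Qed.

Lemma Dq_R34_sat_qFT D Z : sat_qTT Y -> Dq q (union R3 R4) D -> body_holds Z Y D ->
  sat_qFT Y.
Proof.
move=> hTT hD bD r hr br.
case: hr => [h2|h3|h4|hfree].
- by apply: hTT br; constructor 2.
- by apply: (Dq_sat hD bD) br; left.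
- by apply: (Dq_sat hD bD) br; right.
- by apply: hTT br; constructor 3.
Qed.

Section Schemes.
Variable Z : interp A.
Hypothesis ZY : forall a, Z a -> Y a.

Ltac unfold_holds :=
  rewrite /rule_holds /bodyq /headq /= ?body_holdsU ?head_holdsU ?body_holds_notA
    ?body_holds_nnS ?body_holdsU ?head_holdsU ?body_holds1 /=.

Lemma Rfree_holds r : Rfree r -> rule_holds Z Y r <-> (bodyq Z r -> headq Z r).
Proof.
move=> /Rfree_lits [np nq nnq hq]; rewrite (rule_holds_qFF _ ZY).
by split=> [|h _ _]; [apply|].
Qed.

Lemma rule1a_holds r0 r4 : R4 r4 -> rule_holds Z Y (rule1a r0 r4) <->
  (bodyq Z r0 -> bodyq Z r4 -> headq Z r0 \/ headq Z r4).
Proof.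
move=> h4; rewrite /rule1a; unfold_holds.
by rewrite (body_holds_R4 _ _ h4) (head_holds_Hq _ ZY) /headq; tauto.
Qed.

Lemma rule2a_holds r0 r3 r' : rule_holds Z Y (rule2a r0 r3 r') <->
  (bodyq Z r0 -> bodyq Z r3 -> ~ headq Y r' -> bodyq Y r' -> headq Z r0 \/ headq Z r3).
Proof. by rewrite /rule2a; unfold_holds; rewrite (head_holds_Hq _ ZY) /headq; tauto. Qed.

Lemma rule3a_holds r0 r3 h D : rule_holds Z Y (rule3a r0 r3 h D) <->
  (bodyq Z r0 -> Y h -> body_holds Z Y D -> bodyq Z r3 -> ~ headq Y r3 -> headq Z r0).
Proof. by rewrite /rule3a; unfold_holds; rewrite (head_holds_Hq _ ZY) /headq; tauto. Qed.

Lemma rule1b_holds r2 r4 : R4 r4 -> rule_holds Z Y (rule1b r2 r4) <->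
  (bodyq Z r2 -> ~ headq Y r4 -> bodyq Y r4 -> headq Z r2).
Proof.
move=> h4; rewrite /rule1b; unfold_holds.
by rewrite (body_holds_R4 _ _ h4) (head_holds_Hq _ ZY) /headq; tauto.
Qed.

Lemma rule2b_holds r2 r3 r' : rule_holds Z Y (rule2b r2 r3 r') <->
  (bodyq Z r2 -> ~ (headq Y r3 \/ headq Y r') -> bodyq Y r3 -> bodyq Y r' -> headq Z r2).
Proof. by rewrite /rule2b; unfold_holds; rewrite (head_holds_Hq _ ZY) /headq; tauto. Qed.

Lemma rule3b_holds r2 r3 h D : rule_holds Z Y (rule3b r2 r3 h D) <->
  (bodyq Z r2 -> ~ headq Y r3 -> bodyq Y r3 -> Y h -> body_holds Z Y D -> headq Z r2).
Proof. by rewrite /rule3b; unfold_holds; rewrite (head_holds_Hq _ ZY) /headq; tauto. Qed.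

Lemma rule4_holds r' D : rule_holds Z Y (rule4 r' D) <->
  (bodyq Z r' -> body_holds Z Y D -> headq Z r').
Proof. by rewrite /rule4; unfold_holds; tauto. Qed.

Lemma rule5_holds r' r3 r0 D : rule_holds Z Y (rule5 r' r3 r0 D) <->
  (bodyq Z r' -> ~ (headq Y r0 \/ headq Y r3) -> bodyq Y r0 -> bodyq Y r3 ->
   body_holds Z Y D -> headq Z r').
Proof.
rewrite /rule5; unfold_holds.
by rewrite (@head_holds_Hq Y r0 (fun a h => h)) /headq; tauto.
Qed.

Lemma rule6_holds r' r3 h D : rule_holds Z Y (rule6 r' r3 h D) <->
  (bodyq Z r' -> ~ headq Y r3 -> bodyq Y r3 -> Y h -> body_holds Z Y D -> headq Z r').
Proof. by rewrite /rule6; unfold_holds; tauto. Qed.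

Lemma rule7_holds r0 r3 r3' D h : rule_holds Z Y (rule7 r0 r3 r3' D h) <->
  (bodyq Z r0 -> bodyq Z r3 -> ~ headq Y r3' -> bodyq Y r3' -> Y h -> body_holds Z Y D ->
   headq Z r0 \/ headq Z r3).
Proof. by rewrite /rule7; unfold_holds; rewrite (head_holds_Hq _ ZY) /headq; tauto. Qed.

End Schemes.

Section Soundness.
Variable Z : interp A.
Hypothesis ZY : forall a, Z a -> Y a.
Hypothesis Ycase : sat_qFF Y \/ (sat_qTT Y /\ ~ sat_qFT Y).
Hypothesis FF_Z : sat_qFF Y -> sat_qFF Z.
Hypothesis TT_Z : sat_qTT Y /\ ~ sat_qFT Y -> sat_qFT Z \/ sat_qTT Z.

Lemma R14_or3 r : R1 r \/ R4 r -> [\/ R1 r, R4 r | Rfree r].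
Proof. by case=> h; [constructor 1|constructor 2]. Qed.

Lemma R02_or3 r : R0 r \/ R2 r -> [\/ R0 r, R2 r | Rfree r].
Proof. by case=> h; [constructor 1|constructor 2]. Qed.

Lemma sat_qTT_of_Dq r0 h D : h \in H r0 -> Y h ->
  Dq q (minus_rule (union R0 R2) r0) D -> body_holds Z Y D -> sat_qTT Y.
Proof.
move=> hr0 Yh hD bD.
by case: Ycase => [hFF|[]//]; apply: Dq_R02_sat_qTT hFF hr0 Yh hD bD.
Qed.

Lemma not_sat_qFT r3 : R3 r3 -> bodyq Y r3 -> ~ headq Y r3 -> ~ sat_qFT Y.
Proof. by move=> h3 b3 nh3 sat; apply: nh3; apply: sat b3; constructor 2. Qed.

Lemma Rfree_sound r : Rfree r -> rule_holds Z Y r.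
Proof.
move=> hr; apply/(Rfree_holds ZY hr) => b.
case: Ycase => [hFF|hTT]; first by apply: (FF_Z hFF) b; constructor 3.
by case: (TT_Z hTT) => sat; apply: sat b; [constructor 4|constructor 3].
Qed.

Lemma rule1a_sound r0 r4 : R0 r0 -> R4 r4 -> rule_holds Z Y (rule1a r0 r4).
Proof.
move=> h0 h4; apply/(rule1a_holds ZY _ h4) => b0 b4.
case: Ycase => [hFF|hTT]; first by right; apply: (FF_Z hFF) b4; constructor 2.
case: (TT_Z hTT) => sat; [right; apply: sat b4|left; apply: sat b0].
- by constructor 3.
- by constructor 1.
Qed.

Lemma rule2a_sound r0 r3 r' : R0 r0 -> R3 r3 -> R1 r' \/ R4 r' ->
  rule_holds Z Y (rule2a r0 r3 r').
Proof.
move=> h0 h3 h'; apply/(rule2a_holds ZY) => b0 b3 nh' b'.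
case: Ycase => [hFF|hTT]; first by case: nh'; apply: hFF b'; apply: R14_or3.
case: (TT_Z hTT) => sat; [right; apply: sat b3|left; apply: sat b0].
- by constructor 2.
- by constructor 1.
Qed.

Lemma rule3a_sound r0 r3 h D : R0 r0 -> R3 r3 -> h \in H r0 ->
  Dq q (minus_rule (union R0 R2) r0) D -> rule_holds Z Y (rule3a r0 r3 h D).
Proof.
move=> h0 h3 hr0 hD; apply/(rule3a_holds ZY) => b0 Yh bD b3 nh3.
have nFT := not_sat_qFT h3 (bodyq_sub ZY b3) nh3.
have hTT := sat_qTT_of_Dq hr0 Yh hD bD.
case: (TT_Z (conj hTT nFT)) => sat; last by apply: sat b0; constructor 1.
by case: nh3; apply: (headq_sub ZY); apply: sat b3; constructor 2.
Qed.

Lemma rule1b_sound r2 r4 : R2 r2 -> R4 r4 -> rule_holds Z Y (rule1b r2 r4).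
Proof.
move=> h2 h4; apply/(rule1b_holds ZY _ h4) => b2 nh4 b4.
case: Ycase => [hFF|hTT]; first by case: nh4; apply: hFF b4; constructor 2.
by case: (TT_Z hTT) => sat; apply: sat b2; [constructor 1|constructor 2].
Qed.

Lemma rule2b_sound r2 r3 r' : R2 r2 -> R3 r3 -> R1 r' \/ R4 r' ->
  rule_holds Z Y (rule2b r2 r3 r').
Proof.
move=> h2 h3 h'; apply/(rule2b_holds ZY) => b2 nh b3 b'.
case: Ycase => [hFF|hTT]; first by case: nh; right; apply: hFF b'; apply: R14_or3.
by case: (TT_Z hTT) => sat; apply: sat b2; [constructor 1|constructor 2].
Qed.

Lemma rule3b_sound r2 r3 h D : R2 r2 -> R3 r3 -> h \in H r2 ->
  Dq q (minus_rule (union R0 R2) r2) D -> rule_holds Z Y (rule3b r2 r3 h D).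
Proof.
move=> h2 h3 hr2 hD; apply/(rule3b_holds ZY) => b2 nh3 b3 Yh bD.
have nFT := not_sat_qFT h3 b3 nh3.
have hTT := sat_qTT_of_Dq hr2 Yh hD bD.
by case: (TT_Z (conj hTT nFT)) => sat; apply: sat b2; [constructor 1|constructor 2].
Qed.

Lemma rule4_sound r' D : R1 r' \/ R4 r' -> Dq q (union R3 R4) D ->
  rule_holds Z Y (rule4 r' D).
Proof.
move=> h' hD; apply/rule4_holds => b' bD.
case: Ycase => [hFF|[hTT nFT]]; first by apply: (FF_Z hFF) b'; apply: R14_or3.
by case: nFT; apply: Dq_R34_sat_qFT hTT hD bD.
Qed.

Lemma rule5_sound r' r3 r0 D : R1 r' \/ R4 r' -> R0 r0 \/ R2 r0 ->
  rule_holds Z Y (rule5 r' r3 r0 D).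
Proof.
move=> h' h0; apply/rule5_holds => b' nh b0 b3 bD.
case: Ycase => [hFF|[hTT _]]; first by apply: (FF_Z hFF) b'; apply: R14_or3.
by case: nh; left; apply: hTT b0; apply: R02_or3.
Qed.

Lemma rule6_sound r' r3 h D : R1 r' \/ R4 r' -> h \in Hq q r' ->
  Dq q (minus_rule (union R1 R4) r') D -> rule_holds Z Y (rule6 r' r3 h D).
Proof.
move=> h' hr' hD; apply/rule6_holds => b' nh3 b3 Yh bD.
have hFF : sat_qFF Y.
  by case: Ycase => [//|[hTT _]]; apply: Dq_R14_sat_qFF hTT hr' Yh hD bD.
by apply: (FF_Z hFF) b'; apply: R14_or3.
Qed.

Lemma rule7_sound r0 r3 r3' D h : R0 r0 -> R3 r3 -> R3 r3' ->
  Dq q (minus_rule (union R0 R2) r0) D -> h \in H r0 ->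
  rule_holds Z Y (rule7 r0 r3 r3' D h).
Proof.
move=> h0 h3 h3' hD hr0; apply/(rule7_holds ZY) => b0 b3 nh3' b3' Yh bD.
have nFT := not_sat_qFT h3' b3' nh3'.
have hTT := sat_qTT_of_Dq hr0 Yh hD bD.
case: (TT_Z (conj hTT nFT)) => sat; [right; apply: sat b3|left; apply: sat b0].
- by constructor 2.
- by constructor 1.
Qed.

End Soundness.

Lemma fSP_pre_sound Z : (forall a, Z a -> Y a) -> sp_cond Z ->
  forall r, FP r -> rule_holds Z Y r.
Proof.
move=> ZY [Yc [FF_Z TT_Z]] r.
case=> [|[|[|[|[|[|[|[|[|[]]]]]]]]]].
- exact: Rfree_sound.
- by move=> [r0 [r4 [h0 [h4 ->]]]]; apply: rule1a_sound.
- by move=> [r0 [r3 [r' [h0 [h3 [h' ->]]]]]]; apply: rule2a_sound.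
- by move=> [r0 [r3 [h [D [h0 [h3 [hr0 [hD ->]]]]]]]]; apply: rule3a_sound.
- by move=> [r2 [r4 [h2 [h4 ->]]]]; apply: rule1b_sound.
- by move=> [r2 [r3 [r' [h2 [h3 [h' ->]]]]]]; apply: rule2b_sound.
- by move=> [r2 [r3 [h [D [h2 [h3 [hr2 [hD ->]]]]]]]]; apply: rule3b_sound.
- by move=> [r' [D [h' [hD [_ ->]]]]]; apply: rule4_sound.
- by move=> [r' [r3 [r0 [D [h' [_ [h0 [_ [_ ->]]]]]]]]]; apply: rule5_sound.
- by move=> [r' [r3 [h [D [h' [_ [hr' [hD ->]]]]]]]]; apply: rule6_sound.
- by move=> [r0 [r3 [r3' [D [h [h0 [h3 [h3' [_ [hD [hr0 ->]]]]]]]]]]]; apply: rule7_sound.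
Qed.

Lemma Rfree_holds_of_fSP Z r : (forall a, Z a -> Y a) -> (forall r, FP r -> rule_holds Z Y r) ->
  Rfree r -> bodyq Z r -> headq Z r.
Proof. by move=> ZY FZ hr; apply/(Rfree_holds ZY hr)/FZ/Rfree_in_fSP. Qed.

Lemma violated_R34_of : sat_qTT Y -> ~ sat_qFT Y ->
  exists r, [/\ R3 r \/ R4 r, bodyq Y r & ~ headq Y r].
Proof.
move=> hTT /not_all_imply [r [hr br nhr]].
case: hr => [h2|h3|h4|hfree].
- by case: nhr; apply: hTT br; constructor 2.
- by exists r; split=> //; left.
- by exists r; split=> //; right.
- by case: nhr; apply: hTT br; constructor 3.
Qed.

Lemma exists_Dq_R02 r0 : sat_qTT Y ->
  exists D, Dq q (minus_rule (union R0 R2) r0) D /\ forall Z, body_holds Z Y D.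
Proof.
move=> hTT; apply: exists_Dq_true => [r [[[]|[]] _] //|r [hr _] br].
by apply: hTT br; apply: R02_or3.
Qed.

Lemma exists_true_head Z r : (forall a, Z a -> Y a) -> sat_qTT Y -> R0 r \/ R2 r ->
  bodyq Z r -> exists h, h \in H r /\ Y h.
Proof.
move=> ZY hTT hr bZ; have [a [ha Ya]] := hTT r (R02_or3 hr) (bodyq_sub ZY bZ).
by exists a; move: ha; rewrite !inE => /andP [].
Qed.

Section Completeness.
Variable X : interp A.
Hypothesis XY : forall a, X a -> Y a.
Hypothesis FY : forall r, FP r -> rule_holds Y Y r.
Hypothesis FX : forall r, FP r -> rule_holds X Y r.

Let YY : forall a, Y a -> Y a := fun a h => h.

Lemma violated_R34 r' : R1 r' \/ R4 r' -> bodyq Y r' -> ~ headq Y r' ->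
  exists r, [/\ R3 r \/ R4 r, bodyq Y r & ~ headq Y r].
Proof.
move=> h' b' nh'; apply: NNPP => nviol.
have [D [hD bD]] : exists D, Dq q (union R3 R4) D /\ forall Z, body_holds Z Y D.
  apply: exists_Dq_true => [r [[]|[]] //|r hr br].
  by apply: NNPP => nhr; apply: nviol; exists r.
have := FY (rule4_in_fSP h' hD (disjoint_notS (bD Y) b')).
by move/(rule4_holds Y) => /(_ b' (bD Y)).
Qed.

Lemma R02_holds_there r' r : R1 r' \/ R4 r' -> bodyq Y r' -> ~ headq Y r' ->
  R0 r \/ R2 r -> bodyq Y r -> headq Y r.
Proof.
move=> h' b' nh' hr br; apply: NNPP => nhr.
have [[r4 [h4 b4 nh4]]|sat4] :=
  classic (exists r4, [/\ R4 r4, bodyq Y r4 & ~ headq Y r4]).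
  case: hr => [h0|h2].
  - by have /(rule1a_holds YY _ h4) /(_ br b4) := FY (rule1a_in_fSP h0 h4); tauto.
  - by have /(rule1b_holds YY _ h4) /(_ br nh4 b4) := FY (rule1b_in_fSP h2 h4).
have [r3 [[h3|h4] b3 nh3]] := violated_R34 h' b' nh'; last by apply: sat4; exists r3.
have [D [hD bD]] : exists D, Dq q R4 D /\ forall Z, body_holds Z Y D.
  apply: exists_Dq_true => [r4 [] //|r4 h4 b4].
  by apply: NNPP => nh4; apply: sat4; exists r4.
have := FY (rule5_in_fSP h' h3 hr hD (disjoint_notS (bD Y) b')).
by move/(rule5_holds Y) => /(_ b' _ br b3 (bD Y)); tauto.
Qed.

Lemma sp_cond_there : sat_qFF Y \/ (sat_qTT Y /\ ~ sat_qFT Y).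
Proof.
have [|/not_all_imply [r' [hr' b' nh']]] := classic (sat_qFF Y); first by left.
have h' : R1 r' \/ R4 r'.
  case: hr' => [?|?|hfree]; [by left|by right|].
  by case: nh'; apply: (Rfree_holds_of_fSP YY FY hfree b').
right; split.
- move=> r [h0|h2|hfree] br.
  + exact: R02_holds_there h' b' nh' (or_introl h0) br.
  + exact: R02_holds_there h' b' nh' (or_intror h2) br.
  + exact: Rfree_holds_of_fSP YY FY hfree br.
- move=> hFT; have [r [h34 br nhr]] := violated_R34 h' b' nh'.
  by apply: nhr; apply: hFT br; case: h34 => ?; [constructor 2|constructor 3].
Qed.

Lemma R14_holds_here r : R1 r \/ R4 r -> sat_qFF Y -> bodyq X r -> headq X r.
Proof.
move=> h' hFF bX; have bY := bodyq_sub XY bX.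
have [[r3 [h3 b3 nh3]]|sat3] :=
  classic (exists r3, [/\ R3 r3, bodyq Y r3 & ~ headq Y r3]).
  have [D [hD bD]] : exists D, Dq q (minus_rule (union R1 R4) r) D /\
      forall Z, body_holds Z Y D.
    apply: exists_Dq_true => [r1 [[[]|[]] _] //|r1 [hr1 _] b1].
    by apply: hFF b1; apply: R14_or3.
  have [a [ha Ya]] := hFF r (R14_or3 h') bY.
  have := FX (rule6_in_fSP h' h3 ha hD).
  by move/(rule6_holds X) => /(_ bX nh3 b3 Ya (bD X)).
have [D [hD bD]] : exists D, Dq q (union R3 R4) D /\ forall Z, body_holds Z Y D.
  apply: exists_Dq_true => [r1 [[]|[]] //|r1 [h3|h4] b1].
  - by apply: NNPP => nh1; apply: sat3; exists r1.
  - by apply: hFF b1; constructor 2.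
have := FX (rule4_in_fSP h' hD (disjoint_notS (bD Y) bY)).
by move/(rule4_holds X) => /(_ bX (bD X)).
Qed.

Lemma sat_qFF_here : sat_qFF Y -> sat_qFF X.
Proof.
move=> hFF r [h1|h4|hfree].
- exact: R14_holds_here (or_introl h1) hFF.
- exact: R14_holds_here (or_intror h4) hFF.
- exact: Rfree_holds_of_fSP XY FX hfree.
Qed.

Lemma R2_holds_here r2 : sat_qTT Y -> ~ sat_qFT Y -> R2 r2 -> bodyq X r2 -> headq X r2.
Proof.
move=> hTT nFT h2 b2; apply: NNPP => nh2.
have [h [hr2 Yh]] := exists_true_head XY hTT (or_intror h2) b2.
have [rv [[h3|h4] br nhr]] := violated_R34_of hTT nFT.
- have [D [hD bD]] := exists_Dq_R02 r2 hTT.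
  by have /(rule3b_holds XY) /(_ b2 nhr br Yh (bD X)) := FX (rule3b_in_fSP h2 h3 hr2 hD).
- by have /(rule1b_holds XY _ h4) /(_ b2 nhr br) := FX (rule1b_in_fSP h2 h4).
Qed.

Lemma R0_holds_here r : sat_qTT Y -> ~ sat_qFT Y -> ~ sat_qFT X -> R0 r -> bodyq X r ->
  headq X r.
Proof.
move=> hTT nFT nFTX h0 bX; apply: NNPP => nhX.
have [rc [hrc bc nhc]] := not_all_imply nFTX.
have [h [hr0 Yh]] := exists_true_head XY hTT (or_introl h0) bX.
case: hrc => [h2|h3c|h4|hfree].
- exact/nhc/(R2_holds_here hTT nFT h2 bc).
- have [rv [[h3|h4] br nhr]] := violated_R34_of hTT nFT.
  + have [D [hD bD]] := exists_Dq_R02 r hTT.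
    have [eq_rc|ne] := classic (rc = rv).
      subst rv; have := FX (rule3a_in_fSP h0 h3c hr0 hD).
      by move/(rule3a_holds XY) => /(_ bX Yh (bD X) bc nhr).
    have := FX (rule7_in_fSP h0 h3c h3 ne hD hr0).
    by move/(rule7_holds XY) => /(_ bX bc nhr br Yh (bD X)); tauto.
  + have := FX (rule2a_in_fSP h0 h3c (or_intror h4)).
    by move/(rule2a_holds XY) => /(_ bX bc nhr br); tauto.
- by have /(rule1a_holds XY _ h4) /(_ bX bc) := FX (rule1a_in_fSP h0 h4); tauto.
- exact/nhc/(Rfree_holds_of_fSP XY FX hfree bc).
Qed.

Lemma sat_qFT_or_qTT_here : sat_qTT Y /\ ~ sat_qFT Y -> sat_qFT X \/ sat_qTT X.
Proof.
move=> [hTT nFT]; have [|nFTX] := classic (sat_qFT X); [by left|right].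
move=> r [h0|h2|hfree] bX.
- exact: R0_holds_here.
- exact: R2_holds_here.
- exact: Rfree_holds_of_fSP XY FX hfree bX.
Qed.

End Completeness.

Lemma fSP_pre_ht_iff X : (forall a, X a -> Y a) ->
  (forall r, FP r -> rule_holds Y Y r /\ rule_holds X Y r) <-> sp_cond X.
Proof.
move=> XY; split=> [hF|hX r hr].
- have FY r : FP r -> rule_holds Y Y r by move/hF => [].
  have FX r : FP r -> rule_holds X Y r by move/hF => [].
  split; first exact: (sp_cond_there FY).
  by split; [exact: (sat_qFF_here XY FX)|exact: (sat_qFT_or_qTT_here XY FX)].
- split; last exact: fSP_pre_sound hX r hr.
  apply: fSP_pre_sound hr => //; case: hX => Yc _.
  by do 2![split=> //] => -[hTT _]; right.
Qed.

Lemma sp_model_iff X : (forall a, X a -> Y a) ->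
  sp_model (ht_model (of_prog P0)) X Y <-> sp_cond X.
Proof.
move=> XY.
have YY : forall a, Y a -> Y a by [].
have e1 : ht_model (of_prog P0) Y Y <-> sat_qFF Y.
  rewrite -ht_model_NF -/NFP ht_model_split -(NFP_holds_qFF YY).
  by split=> [[_ h _]|h] //; split.
have e2 : ht_model (of_prog P0) X Y <-> sat_qFF Y /\ sat_qFF X.
  rewrite -ht_model_NF -/NFP ht_model_split -(NFP_holds_qFF YY) -(NFP_holds_qFF XY).
  by split=> [[_ h1 h2]|[h1 h2]]; split.
have e3 : ht_model (of_prog P0) (addq Y) (addq Y) <-> sat_qTT Y.
  rewrite -ht_model_NF -/NFP ht_model_split -NFP_holds_qTT.
  by split=> [[_ h _]|h] //; split.
have e4 : ht_model (of_prog P0) Y (addq Y) <-> sat_qTT Y /\ sat_qFT Y.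
  rewrite -ht_model_NF -/NFP ht_model_split -NFP_holds_qTT -(NFP_holds_qFT YY).
  split=> [[_ h1 h2]|[h1 h2]]; first by split.
  by split=> // a; left.
have e5 : ht_model (of_prog P0) X (addq Y) <-> sat_qTT Y /\ sat_qFT X.
  rewrite -ht_model_NF -/NFP ht_model_split -NFP_holds_qTT -(NFP_holds_qFT XY).
  split=> [[_ h1 h2]|[h1 h2]]; first by split.
  by split=> // a /XY; left.
have e6 : ht_model (of_prog P0) (addq X) (addq Y) <-> sat_qTT Y /\ sat_qTT X.
  rewrite -ht_model_NF -/NFP ht_model_split -!NFP_holds_qTT.
  split=> [[_ h1 h2]|[h1 h2]]; first by split.
  by split=> // a [/XY|->]; [left|right].
by rewrite /sp_model /sp_cond; move: e1 e2 e3 e4 e5 e6; tauto.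
Qed.
End Level.

Definition delq U : interp A := fun a => U a /\ a != q.

Lemma agree_delq U : agree_on (fun a => a != q) U (delq U).
Proof. by move=> a aq; rewrite /delq; split=> [|[]]. Qed.

Definition q_free r := q_free_body (B r) /\ q \notin H r.

Lemma rule_holds_delq r U W : q_free r ->
  rule_holds U W r <-> rule_holds (delq U) (delq W) r.
Proof.
move=> [hB /neq_q_of_notin hH].
split; apply: (rule_holds_agree hH hB); apply: agree_delq || apply/agree_on_sym/agree_delq.
Qed.

Lemma q_free_bodyU S1 S2 : q_free_body S1 -> q_free_body S2 -> q_free_body (S1 `|` S2).
Proof. by move=> h1 h2 l; rewrite inE => /orP [/h1|/h2]. Qed.

Lemma q_notinU T1 T2 : q \notin T1 -> q \notin T2 -> q \notin T1 `|` T2.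
Proof. by rewrite inE negb_or => -> ->. Qed.

Lemma q_free_notA T : q \notin T -> q_free_body (notA T).
Proof. by move=> /neq_q_of_notin qT l /imfsetP [a /= /qT aq ->]. Qed.

Lemma q_free_nnS S : q_free_body S -> q_free_body (nnS S).
Proof. by move=> hS l /imfsetP [l' /= /hS + ->]; case: l'. Qed.

Lemma q_free_body1 l : atom_of l != q -> q_free_body [fset l].
Proof. by move=> h l'; rewrite inE => /eqP ->. Qed.

Lemma q_free_Dq (Q : rset A) D : Dq q Q D -> q_free_body D.
Proof.
move=> [c [hc hD]] x /hD [r [Qr <-]].
case: (hc r Qr) => [[l [/q_free_Bq + ->]]|[h [/(neq_q_of_notin (q_notin_Hq r)) + ->]]] //.
by case: l.
Qed.

Lemma q_notin_H02 r : R0 r \/ R2 r -> q \notin H r.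
Proof. by case=> [/R0_lits []|[_ []]]. Qed.

Lemma q_free_R4 r : R4 r -> q_free_body (B r).
Proof.
move=> h4 l hl; have [np nq] := R4_lits h4; have nnq := h4.2.1.
by apply/eqP => e; case: l hl e => a hl /= e; subst a; rewrite hl in np nq nnq.
Qed.

Lemma q_free_Rfree r : Rfree r -> q_free r.
Proof.
move=> [_ nocc]; split; last by apply/negP => h; apply: nocc; left.
by move=> l hl; apply/eqP => e; apply: nocc; right; exists l.
Qed.

Ltac q_free_tac := repeat first
  [ apply: q_free_bodyU | apply: q_notinU | apply: q_free_notA | apply: q_free_nnS
  | solve [exact: q_free_Bq] | solve [exact: q_notin_Hq]
  | solve [apply: q_free_Dq; eassumption]
  | solve [apply: q_free_R4; eassumption]
  | solve [apply: q_notin_H02; eassumption || (left; eassumption) || (right; eassumption)]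
  | solve [apply: q_free_body1; apply: (neq_q_of_notin (q_notin_Hq _)); eassumption]
  | solve [apply: q_free_body1; apply: neq_q_of_notin; [apply: q_notin_H02;
             (left; eassumption) || (right; eassumption) | eassumption]] ].

Lemma fSP_pre_q_free r : FP r -> q_free r.
Proof.
case=> [|[|[|[|[|[|[|[|[|[]]]]]]]]]].
- exact: q_free_Rfree.
- by move=> [r0 [r4 [h0 [h4 ->]]]]; split=> /=; q_free_tac.
- by move=> [r0 [r3 [r' [h0 [h3 [h' ->]]]]]]; split=> /=; q_free_tac.
- by move=> [r0 [r3 [h [D [h0 [h3 [hr0 [hD ->]]]]]]]]; split=> /=; q_free_tac.
- by move=> [r2 [r4 [h2 [h4 ->]]]]; split=> /=; q_free_tac.
- by move=> [r2 [r3 [r' [h2 [h3 [h' ->]]]]]]; split=> /=; q_free_tac.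
- by move=> [r2 [r3 [h [D [h2 [h3 [hr2 [hD ->]]]]]]]]; split=> /=; q_free_tac.
- by move=> [r' [D [h' [hD [_ ->]]]]]; split=> /=; q_free_tac.
- by move=> [r' [r3 [r0 [D [h' [h3 [h0 [hD [_ ->]]]]]]]]]; split=> /=; q_free_tac.
- by move=> [r' [r3 [h [D [h' [h3 [hr' [hD ->]]]]]]]]; split=> /=; q_free_tac.
- move=> [r0 [r3 [r3' [D [h [h0 [h3 [h3' [_ [hD [hr0 ->]]]]]]]]]]].
  by split=> /=; q_free_tac.
Qed.

Lemma fSP_holds_delq U W : (forall a, U a -> W a) ->
  (forall r, fSP q (of_prog P0) r -> rule_holds U W r) <->
  (forall r, FP r -> rule_holds (delq U) (delq W) r).
Proof.
move=> UW; rewrite /fSP rule_holds_NF //.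
by split=> h r hr; apply/(rule_holds_delq U W (fSP_pre_q_free hr)); apply: h.
Qed.

Lemma ht_model_fSP X Y : ht_model (fSP q (of_prog P0)) X Y <->
  (forall a, X a -> Y a) /\ sp_model (ht_model (of_prog P0)) (delq X) (delq Y).
Proof.
have nYq : ~ delq Y q by case=> _; rewrite eqxx.
have YY : forall a, Y a -> Y a by [].
rewrite ht_model_split; split.
- move=> [XY /(fSP_holds_delq YY) hY /(fSP_holds_delq XY) hX].
  have dXY : forall a, delq X a -> delq Y a by move=> a [/XY].
  split=> //; apply/(sp_model_iff nYq dXY)/(fSP_pre_ht_iff nYq dXY) => r hr.
  by split; [apply: hY|apply: hX].
- move=> [XY].
  have dXY : forall a, delq X a -> delq Y a by move=> a [/XY].
  move=> /(sp_model_iff nYq dXY) /(fSP_pre_ht_iff nYq dXY) h.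
  split=> //.
  + by apply/(fSP_holds_delq YY) => r /h [].
  + by apply/(fSP_holds_delq XY) => r /h [].
Qed.

End Forgetting.

Theorem proposition5 (A : choiceType) (P P' : {fset rule A}) (q : A) :
  strongly_equiv (of_prog P) (of_prog P') ->
  strongly_equiv (fSP q (of_prog P)) (fSP q (of_prog P')).
Proof.
move=> PP'; apply: ht_equiv_strongly_equiv => X Y.
have eqM : ht_model (of_prog P) = ht_model (of_prog P').
  apply: functional_extensionality => U; apply: functional_extensionality => W.
  exact/propositional_extensionality/strongly_equiv_ht_equiv.
by rewrite !ht_model_fSP eqM.
Qed.
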